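(* Let $K\ge 1$ be an integer, $\mathcal{I}=\{1,\dots,K\}$, and let $\lambda_i>0$, $\gamma_{ui}>0$, $\gamma_{di}>0$, $\widetilde{\gamma}_{ui}>0$, $\widetilde{\gamma}_{di}>0$ ($i\in\mathcal{I}$) be given, together with asset proportions $m_i>0$ ($i\in\mathcal{I}$) satisfying $\sum_{i\in\mathcal{I}}m_i<1$. Let $E=\{(l,n)\}\cup\{(hi,n),(hi,o),(li,o): i\in\mathcal{I}\}$. Then there exists a unique function $\mu:E\to[0,\infty)$ (a steady state of the partially segmented market) satisfying, for all $i\in\mathcal{I}$, \[0=-\lambda_i\mu(hi,n)\mu(li,o)+\widetilde{\gamma}_{ui}\mu(l,n)-\widetilde{\gamma}_{di}\mu(hi,n),\] \[0=-\lambda_i\mu(hi,n)\mu(li,o)-\gamma_{ui}\mu(li,o)+\gamma_{di}\mu(hi,o),\] together with the constraints \[\mu(hi,o)+\mu(li,o)=m_i\ \ (i\in\mathcal{I}),\qquad \sum_{i\in\mathcal{I}}m_i+\sum_{i\in\mathcal{I}}\mu(hi,n)+\mu(l,n)=1.\]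
   Context: This is the stationary version of the partially segmented over-the-counter market model: $\mu(z)$ is the proportion of investors in state $z\in E$, where $(l,n)$ denotes low liquidity-type investors owning no asset, $(hi,n)$ high-type investors owning no asset and seeking to buy asset $i$, and $(hi,o)$/$(li,o)$ high/low-type investors owning asset $i$. The time-dependent dynamics are $\dot\mu_t(hi,n)=-\lambda_i\mu_t(hi,n)\mu_t(li,o)+\widetilde{\gamma}_{ui}\mu_t(l,n)-\widetilde{\gamma}_{di}\mu_t(hi,n)$ and $\dot\mu_t(li,o)=-\lambda_i\mu_t(hi,n)\mu_t(li,o)-\gamma_{ui}\mu_t(li,o)+\gamma_{di}\mu_t(hi,o)$ under the stated constraints; a steady state is a solution with zero time derivative. *)

From mathcomp Require Import all_boot all_order all_algebra.
From mathcomp Require Import reals.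
Set Implicit Arguments. Unset Strict Implicit. Unset Printing Implicit Defensive.
Import Order.TTheory GRing.Theory Num.Theory.
Local Open Scope ring_scope.

(* The state space E = {(l,n)} ∪ {(hi,n),(hi,o),(li,o) : i ∈ I}, I = 'I_K
   (index i : 'I_K stands for asset i+1). *)
Inductive state (K : nat) : Type :=
  | st_ln : state K
  | st_hn : 'I_K -> state K
  | st_ho : 'I_K -> state K
  | st_lo : 'I_K -> state K.

Definition is_steady_state (R : realType) (K : nat)
  (lam gu gd gtu gtd m : 'I_K -> R) (mu : state K -> R) : Prop :=
  (forall z, 0 <= mu z) /\
  (forall i : 'I_K,
      0 = - (lam i * mu (st_hn i) * mu (st_lo i)) + gtu i * mu (st_ln K)
          - gtd i * mu (st_hn i)) /\
  (forall i : 'I_K,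
      0 = - (lam i * mu (st_hn i) * mu (st_lo i)) - gu i * mu (st_lo i)
          + gd i * mu (st_ho i)) /\
  (forall i : 'I_K, mu (st_ho i) + mu (st_lo i) = m i) /\
  (\sum_(i < K) m i + \sum_(i < K) mu (st_hn i) + mu (st_ln K) = 1).

From mathcomp Require Import all_boot all_order all_algebra.
From mathcomp Require Import ring lra.
From mathcomp Require Import reals.
From mathcomp Require Import all_classical all_reals all_analysis.
Import Order.TTheory GRing.Theory Num.Theory numFieldNormedType.Exports.
Set Implicit Arguments. Unset Strict Implicit. Unset Printing Implicit Defensive.
Local Open Scope ring_scope.

(* Eliminating mu(hi,o) = m_i - mu(li,o) leaves two equations per asset linking
   x = mu(l,n), h = mu(hi,n) and o = mu(li,o).  The first makes o a function of h;
   the second then says that h is the nonnegative root of a quadratic whose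
   coefficients are affine in x.  This root h_i(x) is continuous and vanishes at
   x = 0, so x + sum_i h_i(x) takes the value 1 - sum_i m_i somewhere on
   [0, 1 - sum_i m_i] by the intermediate value theorem.  For uniqueness,
   comparing two steady states shows that a larger mu(l,n) forces every mu(hi,n)
   to be at least as large, and the total-mass constraint makes them all equal. *)

Section QuadraticRoot.
Variable R : rcfType.

Definition quad_root (a b c : R) : R := (- b + Num.sqrt (b ^+ 2 + 4 * a * c)) / (2 * a).

Variables (a b c : R).
Hypotheses (a_gt0 : 0 < a) (c_ge0 : 0 <= c).

Let discr_ge0 : 0 <= b ^+ 2 + 4 * a * c.
Proof. by rewrite addr_ge0 ?sqr_ge0 // !mulr_ge0 // ltW. Qed.

Let quad_rootM2a : quad_root a b c * (2 * a) = - b + Num.sqrt (b ^+ 2 + 4 * a * c).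
Proof. by rewrite /quad_root divfK // mulf_neq0 ?gt_eqF. Qed.

Lemma quad_root_ge0 : 0 <= quad_root a b c.
Proof.
rewrite -(pmulr_lge0 _ (_ : 0 < 2 * a)) ?mulr_gt0 // quad_rootM2a addrC subr_ge0.
rewrite (le_trans (ler_norm b)) // -sqrtr_sqr ler_sqrt //.
by rewrite lerDl !mulr_ge0 // ltW.
Qed.

Lemma quad_rootP : a * quad_root a b c ^+ 2 + b * quad_root a b c - c = 0.
Proof.
set r := quad_root a b c; apply: (mulfI (_ : 4 * a != 0)); first by rewrite mulf_neq0 ?gt_eqF.
have -> : 4 * a * (a * r ^+ 2 + b * r - c) = (r * (2 * a) + b) ^+ 2 - (b ^+ 2 + 4 * a * c).
  by ring.
by rewrite quad_rootM2a addrAC addNr add0r sqr_sqrtr // subrr mulr0.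
Qed.

End QuadraticRoot.

Lemma quad_root_c0 (R : rcfType) (a b : R) : 0 <= b -> quad_root a b 0 = 0.
Proof. by move=> b_ge0; rewrite /quad_root mulr0 addr0 sqrtr_sqr ger0_norm // addNr mul0r. Qed.

Section AssetMarket.
Variable R : rcfType.
Variables (lam gu gd gtu gtd m : R).
Hypotheses (lam_gt0 : 0 < lam) (gu_gt0 : 0 < gu) (gd_gt0 : 0 < gd).
Hypotheses (gtu_gt0 : 0 < gtu) (gtd_gt0 : 0 < gtd) (m_gt0 : 0 < m).
Let lam_ge0 := ltW lam_gt0.
Let gu_ge0 := ltW gu_gt0.
Let gd_ge0 := ltW gd_gt0.
Let gtu_ge0 := ltW gtu_gt0.
Let gtd_ge0 := ltW gtd_gt0.
Let m_ge0 := ltW m_gt0.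

(* An equivalent form of the two flow equations of one asset after eliminating
   mu(hi,o), with L, h, o standing for mu(l,n), mu(hi,n), mu(li,o). *)
Definition asset_balance (L h o : R) : Prop :=
  o * (lam * h + gu + gd) = gd * m /\ gtu * L - gtd * h = gd * m - (gu + gd) * o.

Let rate_gt0 (h : R) : 0 <= h -> 0 < lam * h + gu + gd.
Proof. by move=> h_ge0; have := mulr_ge0 lam_ge0 h_ge0; move: gu_gt0 gd_gt0; lra. Qed.

Lemma asset_balance_lo (L h o : R) : 0 <= h -> asset_balance L h o ->
  o = gd * m / (lam * h + gu + gd).
Proof. by move=> h_ge0 [<- _]; rewrite mulfK // gt_eqF ?rate_gt0. Qed.

Lemma asset_balance_hn_le (L h o L' h' o' : R) : 0 <= h -> 0 <= o' ->
  asset_balance L h o -> asset_balance L' h' o' -> L <= L' -> h <= h'.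
Proof.
move=> h_ge0 o'_ge0 [flow_o ex_o] [flow_o' ex_o'] le_LL'.
rewrite leNgt; apply/negP => lt_h'h.
have lt_o'o : o' < o.
  rewrite -(ltr_pM2l (addr_gt0 gu_gt0 gd_gt0)).
  have := ler_wpM2l gtu_ge0 le_LL'; have := ltr_pM2l gtd_gt0 h' h.
  by rewrite lt_h'h; lra.
have le_rate : lam * h' + gu + gd <= lam * h + gu + gd.
  by rewrite !lerD2r ler_wpM2l ?ltW.
have : o' * (lam * h' + gu + gd) < o * (lam * h + gu + gd).
  by rewrite (le_lt_trans (ler_wpM2l o'_ge0 le_rate)) // ltr_pM2r ?rate_gt0.
by rewrite flow_o flow_o' ltxx.
Qed.

(* Substituting o = gd m / (lam h + gu + gd) into the second balance
   equation and clearing the denominator gives this quadratic in h. *)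
Definition hn_at (L : R) : R :=
  quad_root (gtd * lam) (lam * gd * m + gtd * (gu + gd) - gtu * lam * L) (gtu * (gu + gd) * L).

Definition lo_at (L : R) : R := gd * m / (lam * hn_at L + gu + gd).

Lemma hn_at_ge0 (L : R) : 0 <= L -> 0 <= hn_at L.
Proof. by move=> L_ge0; apply: quad_root_ge0; do ![apply: mulr_gt0 | apply: mulr_ge0 | apply: addr_ge0]. Qed.

Lemma hn_at0 : hn_at 0 = 0.
Proof. by rewrite /hn_at !mulr0 subr0 quad_root_c0 //; do ![apply: addr_ge0 | apply: mulr_ge0]. Qed.

Lemma lo_at_ge0 (L : R) : 0 <= L -> 0 <= lo_at L.
Proof. by move=> L_ge0; rewrite divr_ge0 ?mulr_ge0 ?ltW ?rate_gt0 ?hn_at_ge0. Qed.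

Lemma lo_at_le (L : R) : 0 <= L -> lo_at L <= m.
Proof.
move=> L_ge0; have h_ge0 := hn_at_ge0 L_ge0.
rewrite ler_pdivrMr ?rate_gt0 // [gd * m]mulrC ler_wpM2l //.
by rewrite lerDr addr_ge0 // mulr_ge0.
Qed.

Lemma asset_balance_at (L : R) : 0 <= L -> asset_balance L (hn_at L) (lo_at L).
Proof.
move=> L_ge0; have h_ge0 := hn_at_ge0 L_ge0.
have c_ge0 : 0 <= gtu * (gu + gd) * L by rewrite !mulr_ge0 ?addr_ge0.
have root := quad_rootP (lam * gd * m + gtd * (gu + gd) - gtu * lam * L)
  (mulr_gt0 gtd_gt0 lam_gt0) c_ge0.
rewrite -/(hn_at L) in root; set h := hn_at L in h_ge0 root *.
have rate_neq0 := lt0r_neq0 (rate_gt0 h_ge0).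
split; first by rewrite /lo_at mulfVK.
apply/eqP; rewrite -subr_eq0 /lo_at -/h; apply/eqP.
have -> : gtu * L - gtd * h - (gd * m - (gu + gd) * (gd * m / (lam * h + gu + gd)))
    = - (gtd * lam * h ^+ 2 + (lam * gd * m + gtd * (gu + gd) - gtu * lam * L) * h
         - gtu * (gu + gd) * L) / (lam * h + gu + gd).
  by field.
by rewrite root oppr0 mul0r.
Qed.

End AssetMarket.

Lemma quad_root_continuous (R : realType) (a : R) (b c : R -> R) :
  continuous b -> continuous c -> continuous (fun x => quad_root a (b x) (c x)).
Proof.
move=> b_cont c_cont x; apply: cvgM; last exact: cvg_cst.
apply: cvgD; first exact: cvgN (b_cont x).
apply: (continuous_comp (f := fun x => b x ^+ 2 + 4 * a * c x)); last exact: sqrt_continuous.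
apply: cvgD; first by apply: cvgM; apply: b_cont.
by apply: cvgM; [exact: cvg_cst | exact: c_cont].
Qed.

Lemma hn_at_continuous (R : realType) (lam gu gd gtu gtd m : R) :
  continuous (hn_at lam gu gd gtu gtd m).
Proof.
apply: quad_root_continuous => L; last by apply: cvgM; [exact: cvg_cst | exact: cvg_id].
by apply: cvgB; [exact: cvg_cst | apply: cvgM; [exact: cvg_cst | exact: cvg_id]].
Qed.

Section SteadyState.
Variables (R : realType) (K : nat) (lam gu gd gtu gtd m : 'I_K -> R).
Hypotheses (lam_gt0 : forall i, 0 < lam i) (gu_gt0 : forall i, 0 < gu i).
Hypotheses (gd_gt0 : forall i, 0 < gd i) (gtu_gt0 : forall i, 0 < gtu i).
Hypotheses (gtd_gt0 : forall i, 0 < gtd i) (m_gt0 : forall i, 0 < m i).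

Local Notation steady := (is_steady_state lam gu gd gtu gtd m).
Local Notation balance i := (asset_balance (lam i) (gu i) (gd i) (gtu i) (gtd i) (m i)).
Local Notation hn i := (hn_at (lam i) (gu i) (gd i) (gtu i) (gtd i) (m i)).
Local Notation lo i := (lo_at (lam i) (gu i) (gd i) (gtu i) (gtd i) (m i)).

Lemma steady_state_balance (mu : state K -> R) i : steady mu ->
  balance i (mu (st_ln K)) (mu (st_hn i)) (mu (st_lo i)).
Proof.
move=> [_ [flow_hn [flow_lo [mass _]]]].
have := flow_hn i; have := flow_lo i; rewrite -(mass i).
by split; lra.
Qed.

Lemma steady_state_hn_le (mu1 mu2 : state K -> R) i : steady mu1 -> steady mu2 ->
  mu1 (st_ln K) <= mu2 (st_ln K) -> mu1 (st_hn i) <= mu2 (st_hn i).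
Proof.
move=> ss1 ss2; have [mu1_ge0 _] := ss1; have [mu2_ge0 _] := ss2.
exact: (asset_balance_hn_le (lam_gt0 i) (gu_gt0 i) (gd_gt0 i) (gtu_gt0 i) (gtd_gt0 i)
  (mu1_ge0 _) (mu2_ge0 _) (steady_state_balance i ss1) (steady_state_balance i ss2)).
Qed.

Lemma steady_state_unique (mu1 mu2 : state K -> R) :
  steady mu1 -> steady mu2 -> mu1 = mu2.
Proof.
wlog le_ln : mu1 mu2 / mu1 (st_ln K) <= mu2 (st_ln K).
  move=> wlog_le ss1 ss2; have [le|/ltW le] := leP (mu1 (st_ln K)) (mu2 (st_ln K)).
    exact: wlog_le.
  by symmetry; apply: wlog_le.
move=> ss1 ss2; have [mu1_ge0 [_ [_ [mass1 total1]]]] := ss1.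
have [mu2_ge0 [_ [_ [mass2 total2]]]] := ss2.
have le_sum : \sum_(i < K) mu1 (st_hn i) <= \sum_(i < K) mu2 (st_hn i).
  by apply: ler_sum => i _; apply: steady_state_hn_le.
have eq_ln : mu1 (st_ln K) = mu2 (st_ln K) by apply: le_anti; rewrite le_ln /=; lra.
have eq_hn i : mu1 (st_hn i) = mu2 (st_hn i).
  by apply: le_anti; rewrite !steady_state_hn_le // eq_ln.
have eq_lo i : mu1 (st_lo i) = mu2 (st_lo i).
  have lo_of := asset_balance_lo (lam_gt0 i) (gu_gt0 i) (gd_gt0 i).
  rewrite (lo_of _ _ _ _ _ _ (mu1_ge0 _) (steady_state_balance i ss1)).
  by rewrite (lo_of _ _ _ _ _ _ (mu2_ge0 _) (steady_state_balance i ss2)) eq_hn.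
apply: funext => -[|i|i|i] //.
by apply: (@addIr _ (mu1 (st_lo i))); rewrite mass1 eq_lo mass2.
Qed.

Lemma exists_ln_mass : \sum_(i < K) m i < 1 ->
  exists2 L, 0 <= L & L + \sum_(i < K) hn i L = 1 - \sum_(i < K) m i.
Proof.
move=> lt_sum1; set S := 1 - _; have S_ge0 : 0 <= S by rewrite subr_ge0 ltW.
pose G L := L + \sum_(i < K) hn i L.
have G_cont : continuous G.
  move=> L; apply: cvgD; first exact: cvg_id.
  by apply: (continuous_big (op := +%R)) => // [|i _];
    [exact: add_continuous | exact: hn_at_continuous].
have G0 : G 0 = 0.
  by rewrite /G add0r big1 // => i _; apply: hn_at0.
have le_SG : S <= G S.
  by rewrite /G lerDl sumr_ge0 // => i _; apply: hn_at_ge0.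
have : Num.min (G 0) (G S) <= S <= Num.max (G 0) (G S).
  by rewrite G0 (min_l (le_trans S_ge0 le_SG)) (max_r (le_trans S_ge0 le_SG)) S_ge0.
case/(IVT S_ge0 (continuous_subspaceT G_cont)) => L.
by rewrite in_itv /= => /andP[L_ge0 _] GL; exists L.
Qed.

Definition steady_state_at (L : R) (z : state K) : R :=
  match z with
  | st_ln => L
  | st_hn i => hn i L
  | st_ho i => m i - lo i L
  | st_lo i => lo i L
  end.

Lemma steady_state_atP (L : R) : 0 <= L ->
  L + \sum_(i < K) hn i L = 1 - \sum_(i < K) m i -> steady (steady_state_at L).
Proof.
move=> L_ge0 total.
have balance_at i := asset_balance_at (m i) (lam_gt0 i) (gu_gt0 i) (gd_gt0 i) (gtu_gt0 i) (gtd_gt0 i) L_ge0.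
split.
  case=> [|i|i|i] //=.
  - exact: hn_at_ge0.
  - by rewrite subr_ge0 lo_at_le.
  - exact: lo_at_ge0.
split; first by move=> i /=; have [flow exch] := balance_at i; lra.
split; first by move=> i /=; have [flow exch] := balance_at i; lra.
split; first by move=> i /=; rewrite subrK.
have -> : \sum_(i < K) steady_state_at L (st_hn i) = \sum_(i < K) hn i L by [].
by rewrite -addrA [_ + L]addrC total addrC subrK.
Qed.

End SteadyState.

Theorem proposition2 (R : realType) (K : nat) (hK : (1 <= K)%N)
  (lam gu gd gtu gtd m : 'I_K -> R)
  (hlam : forall i, 0 < lam i) (hgu : forall i, 0 < gu i)
  (hgd : forall i, 0 < gd i) (hgtu : forall i, 0 < gtu i)
  (hgtd : forall i, 0 < gtd i) (hm : forall i, 0 < m i)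
  (hsum : \sum_(i < K) m i < 1) :
  exists! mu : state K -> R, is_steady_state lam gu gd gtu gtd m mu.
Proof.
have [L L_ge0 total] := exists_ln_mass hlam hgu hgd hgtu hgtd hm hsum.
have steady_at := steady_state_atP hlam hgu hgd hgtu hgtd hm L_ge0 total.
exists (steady_state_at lam gu gd gtu gtd m L); split=> // mu.
exact: (steady_state_unique hlam hgu hgd hgtu hgtd steady_at).
Qed.
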